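(* For integers $k\ge1$ and $0\le m\le k$, $$C_{1/2,m}(k):=\sum_{j=0}^m(-1)^j\binom{m}{j}\binom{j/2}{k}=(-1)^k\,\frac{2^{-2k+m}\,m}{2k-m}\binom{2k-m}{k}.$$
   Context: For real $x$ and $k\in\mathbb{N}$, $\binom{x}{k}=x(x-1)\cdots(x-k+1)/k!$. *)

From HB Require Import structures.
From mathcomp Require Import all_boot all_order all_algebra.
Set Implicit Arguments. Unset Strict Implicit. Unset Printing Implicit Defensive.
Import Order.TTheory GRing.Theory Num.Theory.
Local Open Scope ring_scope.

Definition gbinom (R : numFieldType) (x : R) (k : nat) : R :=
  (\prod_(i < k) (x - i%:R)) / (k`!)%:R.

From HB Require Import structures.
From mathcomp Require Import all_boot all_order all_algebra.
From mathcomp Require Import ring zify.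
Set Implicit Arguments. Unset Strict Implicit. Unset Printing Implicit Defensive.
Import Order.TTheory GRing.Theory Num.Theory.
Local Open Scope ring_scope.

(* Write S(m, k) for the sum. Pascal's rule, the absorption identity
   j C(m+1, j) = (m+1) C(m, j-1) and (k+1) binom(x, k+1) = (x - k) binom(x, k)
   give the recurrence
     (k+1) S(m+1, k+1) = ((m+1)/2 - k) S(m+1, k) - (m+1)/2 S(m, k).
   As an m-th finite difference of a polynomial of degree k, S(m, k) vanishes
   for m > k, and the closed form obeys the same recurrence, so induction on k
   concludes. *)

Section AltBinomSum.
Variable R : comPzRingType.

Definition alt_binom_sum (a : nat -> R) (m : nat) : R :=
  \sum_(j < m.+1) (-1) ^+ j * 'C(m, j)%:R * a j.

Lemma alt_binom_sum_widen (a : nat -> R) m n : (m <= n)%N ->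
  alt_binom_sum a m = \sum_(j < n.+1) (-1) ^+ j * 'C(m, j)%:R * a j.
Proof.
move=> le_mn; rewrite /alt_binom_sum.
rewrite (big_ord_widen n.+1 (fun j => (-1) ^+ j * 'C(m, j)%:R * a j)) //.
rewrite [LHS]big_mkcond; apply: eq_bigr => j _.
by case: ltnP => // lt_mj; rewrite bin_small // mulr0 mul0r.
Qed.

Lemma alt_binom_sumS (a : nat -> R) m :
  alt_binom_sum a m.+1 = alt_binom_sum a m - alt_binom_sum (fun j => a j.+1) m.
Proof.
rewrite (alt_binom_sum_widen a (leqnSn m)) /alt_binom_sum !(big_ord_recl m.+1) !bin0 -addrA.
congr (_ + _); rewrite -sumrB; apply: eq_bigr => i _.
by rewrite /bump /= binS natrD exprS; ring.
Qed.

Lemma alt_binom_sum_cst (c : R) m : alt_binom_sum (fun _ => c) m.+1 = 0.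
Proof. by rewrite alt_binom_sumS subrr. Qed.

Lemma alt_binom_sum_mul_index (a : nat -> R) m :
  alt_binom_sum (fun j => j%:R * a j) m.+1
  = - m.+1%:R * alt_binom_sum (fun j => a j.+1) m.
Proof.
rewrite /alt_binom_sum big_ord_recl /= !mul0r mulr0 add0r mulr_sumr.
apply: eq_bigr => i _; rewrite /bump /= add1n exprS.
have bin_absorb : 'C(m.+1, i.+1)%:R * i.+1%:R = m.+1%:R * 'C(m, i)%:R :> R.
  by rewrite -!natrM mulnC -mul_bin_diag.
rewrite !mulrA -(mulrA _ _ i.+1%:R) bin_absorb; ring.
Qed.

End AltBinomSum.

Lemma natr_fact_neq0 (R : numDomainType) n : n`!%:R != 0 :> R.
Proof. by rewrite pnatr_eq0 -lt0n fact_gt0. Qed.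

Section HalfBinomSum.
Variable R : numFieldType.

Lemma gbinom0 (x : R) : gbinom x 0 = 1.
Proof. by rewrite /gbinom big_ord0 divr1. Qed.

Lemma gbinomS (x : R) k : gbinom x k.+1 * k.+1%:R = gbinom x k * (x - k%:R).
Proof.
rewrite /gbinom big_ord_recr factS natrM /=.
by field; rewrite nat1r natr_fact_neq0 pnatr_eq0.
Qed.

Lemma gbinom0S k : gbinom (0 : R) k.+1 = 0.
Proof. by rewrite /gbinom big_ord_recl /= subr0 !mul0r. Qed.

Definition half_binom_sum (m k : nat) : R :=
  alt_binom_sum (fun j => gbinom (j%:R / 2) k) m.

Lemma half_binom_sum0S k : half_binom_sum 0 k.+1 = 0.
Proof. by rewrite /half_binom_sum /alt_binom_sum big_ord1 (mul0r 2^-1) gbinom0S mulr0. Qed.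

Lemma half_binom_sum_rec m k :
  half_binom_sum m.+1 k.+1 * k.+1%:R
  = (m.+1%:R / 2 - k%:R) * half_binom_sum m.+1 k - m.+1%:R / 2 * half_binom_sum m k.
Proof.
have -> : half_binom_sum m.+1 k.+1 * k.+1%:R
    = 2^-1 * alt_binom_sum (fun j => j%:R * gbinom (j%:R / 2) k) m.+1
      - k%:R * half_binom_sum m.+1 k.
  rewrite /half_binom_sum /alt_binom_sum mulr_suml !mulr_sumr -sumrB.
  by apply: eq_bigr => j _; rewrite -(mulrA _ (gbinom _ _)) gbinomS; ring.
rewrite alt_binom_sum_mul_index (_ : alt_binom_sum _ m = half_binom_sum m k - half_binom_sum m.+1 k).
  by ring.
by rewrite /half_binom_sum alt_binom_sumS; ring.
Qed.

Lemma half_binom_sum_eq0 m k : (k < m)%N -> half_binom_sum m k = 0.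
Proof.
elim: k m => [|k IH] [|m] //= lt_km.
  rewrite /half_binom_sum /alt_binom_sum; under eq_bigr do rewrite gbinom0.
  exact: (alt_binom_sum_cst 1 m).
apply: (@mulIf _ k.+1%:R); first by rewrite pnatr_eq0.
by rewrite half_binom_sum_rec !IH // 1?ltnW // !mulr0 subrr mul0r.
Qed.

End HalfBinomSum.

Section ClosedForm.
Variable R : numFieldType.

(* The right-hand side of the theorem at k = m + a, so that 2k - m = m + 2a. *)
Definition half_binom_closed (m a : nat) : R :=
  (-1) ^+ (m + a) * ((2%:R ^+ (m + 2 * a)%N)^-1 * m%:R / (m + 2 * a)%:R)
    * 'C(m + 2 * a, m + a)%:R.

Lemma half_binom_closed0 a : half_binom_closed 0 a = 0.
Proof. by rewrite /half_binom_closed mulr0 mul0r mulr0 mul0r. Qed.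

Lemma half_binom_closedE m a :
  half_binom_closed m a
  = (-1) ^+ (m + a) * m%:R * (m + 2 * a)`!%:R
    / (2%:R ^+ (m + 2 * a) * (m + 2 * a)%:R * (m + a)`!%:R * a`!%:R).
Proof.
have fact_bin : 'C(m + 2 * a, m + a)%:R * ((m + a)`!%:R * a`!%:R) = (m + 2 * a)`!%:R :> R.
  have le_bin : (m + a <= m + 2 * a)%N by lia.
  by rewrite -!natrM -(bin_fact le_bin) (_ : m + 2 * a - (m + a) = a)%N //; lia.
rewrite /half_binom_closed -fact_bin !invfM.
(* m + 2a may vanish; its inverse occurs on both sides and is kept opaque. *)
move: ((m + 2 * a)%:R^-1 : R) => invN.
by field; rewrite !natr_fact_neq0 expf_neq0 // pnatr_eq0.
Qed.

Lemma half_binom_closed_step p a :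
  half_binom_closed p.+1 a.+1 * (p + a).+2%:R
  = (p.+1%:R / 2 - (p + a).+1%:R) * half_binom_closed p.+1 a
    - p.+1%:R / 2 * half_binom_closed p a.+1.
Proof.
rewrite !half_binom_closedE.
have -> : (p.+1 + a.+1 = (p + a).+2)%N by lia.
have -> : (p.+1 + 2 * a.+1 = (p + 2 * a).+3)%N by lia.
have -> : (p.+1 + a = (p + a).+1)%N by lia.
have -> : (p.+1 + 2 * a = (p + 2 * a).+1)%N by lia.
have -> : (p + a.+1 = (p + a).+1)%N by lia.
have -> : (p + 2 * a.+1 = (p + 2 * a).+2)%N by lia.
rewrite !factS !natrM !exprS -!natr1 !natrD ?natrM.
field.
(* [field] has unfolded 2 into 0 + 1 + 1 and n.+1 into n + 1; fold them back. *)
rewrite !natr_fact_neq0 add0r expf_eq0 (_ : 1 + 1 = 2%:R :> R) //.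
by rewrite -!natrD !natr1 !pnatr_eq0 andbF.
Qed.

Lemma half_binom_closed_diag q :
  half_binom_closed q.+2 0 * q.+2%:R = - (q.+2%:R / 2) * half_binom_closed q.+1 0.
Proof.
rewrite !half_binom_closedE !muln0 !addn0 !factS fact0 !natrM !exprS -!natr1.
field.
by rewrite natr_fact_neq0 add0r expf_eq0 (_ : 1 + 1 = 2%:R :> R) // !natr1 !pnatr_eq0 andbF.
Qed.

Lemma half_binom_sum_closed k m :
  (m <= k.+1)%N -> half_binom_sum R m k.+1 = half_binom_closed m (k.+1 - m).
Proof.
elim: k m => [|k IH] [|p] le_pk; rewrite ?half_binom_sum0S ?half_binom_closed0 //.
  case: p le_pk => // _.
  apply: (@mulIf _ 1%:R); first by rewrite pnatr_eq0.
  rewrite half_binom_sum_rec half_binom_sum_eq0 // /half_binom_sum /alt_binom_sum big_ord1 gbinom0.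
  by rewrite /half_binom_closed subnn muln0 addn0 binn /= invr1 bin0 expr1; ring.
apply: (@mulIf _ k.+2%:R); first by rewrite pnatr_eq0.
rewrite half_binom_sum_rec.
have [lt_pk | ->] : (p < k.+1)%N \/ p = k.+1 by lia.
  rewrite !IH ?(ltnW lt_pk) //.
  have [a ->] : exists a, k = (p + a)%N by exists (k - p)%N; lia.
  have -> : ((p + a).+2 - p.+1 = a.+1)%N by lia.
  have -> : ((p + a).+1 - p.+1 = a)%N by lia.
  have -> : ((p + a).+1 - p = a.+1)%N by lia.
  by rewrite half_binom_closed_step.
rewrite half_binom_sum_eq0 // IH // !subnn mulr0 sub0r.
by rewrite -mulNr -half_binom_closed_diag.
Qed.

End ClosedForm.

Theorem mainTheorem4 (R : numFieldType) (k m : nat) (hk : (1 <= k)%N) (hm : (m <= k)%N) :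
  \sum_(j < m.+1) (-1) ^+ j * ('C(m, j))%:R * gbinom ((j%:R) / 2%:R : R) k
  = (-1) ^+ k * ((2%:R ^+ (2 * k - m)%N)^-1 * m%:R / ((2 * k - m)%N)%:R)
      * ('C((2 * k - m)%N, k))%:R.
Proof.
case: k hk hm => [//|k] _ le_mk.
transitivity (half_binom_sum R m k.+1); first by [].
rewrite half_binom_sum_closed // /half_binom_closed subnKC //.
by rewrite (_ : m + 2 * (k.+1 - m) = 2 * k.+1 - m)%N //; lia.
Qed.
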